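(* Let $A=(a_i)_{i=1,\dots,n}$ be a sequence of distinct integers between $1$ and $n$ whose permutation graph $G_A$ is bipartite, and let $I,J$ be maximum feasible sets for $A$. Suppose that $(A,I,J)$ has no forbidden pairs, and let $a_i,a_j$ be the elements of the leftmost mixed pile $P_t$, with $i\in I$ and $j\in J$. Then at least one of $(I\setminus\{i\})\cup\{j\}$ and $(J\setminus\{j\})\cup\{i\}$ is feasible.
   Context: A set $I\subseteq[n]$ is feasible for $A$ if $a_i<a_j$ for all $i,j\in I$ with $i<j$; a maximum feasible set is one of largest cardinality. The permutation graph $G_A$ has vertex set $[n]$ and, for $i<j$, an edge $\{i,j\}$ iff $a_i>a_j$. Piles: set $a_0=0$; start with empty piles $P_0,\dots,P_n$; for $i=0,1,\dots,n$ in order, put $a_i$ on top of the pile $P_j$ with smallest index $j$ such that $P_j$ is empty or the top element of $P_j$ is greater than $a_i$; let $P_0,\dots,P_k$ be the resulting nonempty piles. A pile is mixed if it contains exactly two elements $a_i$ and $a_j$ with $i\in I$ and $j\in J$ (with $i\ne j$, so that $i\notin J$, $j\notin I$). A mixed pile $P_t$ is the leftmost mixed pile if no pile $P_s$ with $s<t$ is mixed. A pair of mixed piles is a forbidden pair if the four vertices (indices) of their elements induce a cycle of length $4$ in $G_A$. *)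

From mathcomp Require Import all_boot finmap.
Set Implicit Arguments. Unset Strict Implicit. Unset Printing Implicit Defensive.
Local Open Scope fset_scope.

(* Indices follow the paper: positions 1..n; the sequence is a : nat -> nat,
   only its values on 1..n matter (a_0 := 0 is imposed in the pile process). *)

Definition in_range (n i : nat) : bool := (1 <= i) && (i <= n).

Definition distinct_seq (n : nat) (a : nat -> nat) : Prop :=
  (forall i, in_range n i -> in_range n (a i)) /\
  (forall i j, in_range n i -> in_range n j -> a i = a j -> i = j).

Definition feasible (a : nat -> nat) (I : {fset nat}) : Prop :=
  forall i j, i \in I -> j \in I -> i < j -> a i < a j.

Definition subset_n (n : nat) (I : {fset nat}) : Prop :=
  forall i, i \in I -> in_range n i.

Definition max_feasible (n : nat) (a : nat -> nat) (I : {fset nat}) : Prop :=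
  [/\ subset_n n I, feasible a I &
      forall K : {fset nat}, subset_n n K -> feasible a K -> #|` K| <= #|` I|].

Definition pg_edge (n : nat) (a : nat -> nat) (i j : nat) : bool :=
  [&& in_range n i, in_range n j &
      ((i < j) && (a j < a i)) || ((j < i) && (a i < a j))].

Definition bipartite_pg (n : nat) (a : nat -> nat) : Prop :=
  exists c : nat -> bool, forall i j, pg_edge n a i j -> c i != c j.

(* Piles. A pile is a stack of indices (top = head); pile P stores the
   elements a_k for the indices k in it. a_0 := 0. *)
Definition aval (a : nat -> nat) (k : nat) : nat := if k == 0 then 0 else a k.

Fixpoint put_on_pile (a : nat -> nat) (k : nat) (ps : seq (seq nat)) : seq (seq nat) :=
  match ps with
  | [::] => [::]
  | p :: ps' =>
      match p with
      | [::] => (k :: p) :: ps'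
      | top :: _ => if aval a k < aval a top then (k :: p) :: ps'
                    else p :: put_on_pile a k ps'
      end
  end.

Definition piles (n : nat) (a : nat -> nat) : seq (seq nat) :=
  foldl (fun ps k => put_on_pile a k ps) (nseq n.+1 [::]) (iota 0 n.+1).

Definition pile (n : nat) (a : nat -> nat) (t : nat) : seq nat :=
  nth [::] (piles n a) t.

Definition mixed_with (I J : {fset nat}) (P : seq nat) (i j : nat) : Prop :=
  [/\ i \in I, j \in J, i != j & perm_eq P [:: i; j]].

Definition mixed (I J : {fset nat}) (P : seq nat) : Prop :=
  exists i j, mixed_with I J P i j.

Definition leftmost_mixed (n : nat) (a : nat -> nat) (I J : {fset nat}) (t : nat) : Prop :=
  mixed I J (pile n a t) /\ forall s, s < t -> ~ mixed I J (pile n a s).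

Definition induces_C4 (n : nat) (a : nat -> nat) (S : seq nat) : Prop :=
  exists v1 v2 v3 v4,
    [/\ uniq [:: v1; v2; v3; v4], perm_eq S [:: v1; v2; v3; v4] &
      [/\ [&& pg_edge n a v1 v2, pg_edge n a v2 v3, pg_edge n a v3 v4 & pg_edge n a v4 v1],
          ~~ pg_edge n a v1 v3 & ~~ pg_edge n a v2 v4]].

Definition forbidden_pair (n : nat) (a : nat -> nat) (I J : {fset nat}) (s t : nat) : Prop :=
  [/\ s != t, mixed I J (pile n a s), mixed I J (pile n a t) &
      induces_C4 n a (pile n a s ++ pile n a t)].

Definition no_forbidden_pairs (n : nat) (a : nat -> nat) (I J : {fset nat}) : Prop :=
  forall s t, ~ forbidden_pair n a I J s t.

(* Patience sorting puts the index x on pile p(x), the length of a longest chain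
   0 = x_0 < x_1 < ... < x_p = x increasing in both index and value.  Each pile is
   decreasing, hence a clique of G_A, so bipartiteness leaves at most two elements on
   it.  A feasible set meets each pile at most once, in increasing order, and by
   exchanging its part below u for such a chain, a maximum feasible set containing u
   meets every pile 1, ..., p(u) - 1.
   Let i in I and j in J lie on the leftmost mixed pile t, with i < j.  Then I and J
   share their element on pile t - 1, so the elements of I before i have values below
   a_j and the elements of J before j come before i.  If neither exchange is feasible,
   some v in I has i < v <= j and some v' in J has j < v' and a_v' <= a_i; the elements
   w of I and w' of J on pile t + 1 then make i, w, j, w' a 3412 pattern, i.e. a
   4-cycle of G_A, and piles t and t + 1 form a forbidden pair. *)

From mathcomp Require Import all_boot finmap zify.
Set Implicit Arguments. Unset Strict Implicit. Unset Printing Implicit Defensive.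
Local Open Scope fset_scope.

Lemma put_on_pile_spec (a : nat -> nat) (k : nat) (ps : seq (seq nat)) :
  has (@nilp nat) ps ->
  exists s, [/\ s < size ps,
    put_on_pile a k ps = set_nth [::] ps s (k :: nth [::] ps s),
    (forall s', s' < s -> exists top r,
       nth [::] ps s' = top :: r /\ aval a top <= aval a k) &
    (nth [::] ps s = [::] \/
     exists top r, nth [::] ps s = top :: r /\ aval a k < aval a top)].
Proof.
elim: ps => [|[|top r] ps IH] //= ps_nil.
  by exists 0; split => //; left.
case: ifP => lt_k_top.
  by exists 0; split => //; right; exists top, r.
have [s [lt_s -> skip place]] := IH ps_nil.
exists s.+1; split => // -[|s'] lt_s's; last exact: skip.
by exists top, r; rewrite leqNgt lt_k_top.
Qed.

Section PileInvariant.
Variables (n : nat) (a : nat -> nat).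
Local Notation av := (aval a).

Record pile_inv (m : nat) (ps : seq (seq nat)) : Prop := PileInv {
  size_piles : size ps = n.+1;
  pile_mem_lt : forall s x, x \in nth [::] ps s -> x < m;
  pile_mem_ex : forall x, x < m -> exists s, x \in nth [::] ps s;
  pile_mem_unique : forall s s' x,
    x \in nth [::] ps s -> x \in nth [::] ps s' -> s = s';
  uniq_pile : forall s, uniq (nth [::] ps s);
  pile_aval_decr : forall s x y,
    x \in nth [::] ps s -> y \in nth [::] ps s -> x < y -> av y < av x;
  pile_top_max : forall s top r y,
    nth [::] ps s = top :: r -> y \in nth [::] ps s -> y <= top;
  pile_tops_sorted : forall s s' top top' r r', s < s' ->
    nth [::] ps s = top :: r -> nth [::] ps s' = top' :: r' -> av top <= av top';
  prev_pile_below : forall s x, x \in nth [::] ps s.+1 ->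
    exists y, [/\ y \in nth [::] ps s, y < x & av y < av x];
  increasing_pile_lt : forall s s' x y, x \in nth [::] ps s -> y \in nth [::] ps s' ->
    x < y -> av x < av y -> s < s'
}.

Section Invariant.
Variables (m : nat) (ps : seq (seq nat)).
Hypothesis inv : pile_inv m ps.

Lemma pile_index_le s x : x \in nth [::] ps s -> s <= x.
Proof.
elim: s x => // s IH x /(prev_pile_below inv) [y [/IH le_s_y lt_y_x _]].
exact: leq_ltn_trans lt_y_x.
Qed.

Lemma pile_nonempty_lt s : nth [::] ps s != [::] -> s < m.
Proof.
case E: (nth [::] ps s) => [|x r] // _.
have x_in : x \in nth [::] ps s by rewrite E mem_head.
exact: leq_ltn_trans (pile_index_le x_in) (pile_mem_lt inv x_in).
Qed.

Lemma pile_nonempty_prefix s s' :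
  s < s' -> nth [::] ps s' != [::] -> nth [::] ps s != [::].
Proof.
have pred_nonempty k : nth [::] ps k.+1 != [::] -> nth [::] ps k != [::].
  case E: (nth [::] ps k.+1) => [|x r] // _.
  have /(prev_pile_below inv) [y [+ _ _]] : x \in nth [::] ps k.+1 by rewrite E mem_head.
  by case: (nth [::] ps k).
elim: s' => // s' IH; rewrite ltnS leq_eqVlt => /orP [/eqP -> | lt_s_s'] /pred_nonempty //.
exact: IH.
Qed.

Lemma pile_top_aval_min s top r x :
  nth [::] ps s = top :: r -> x \in nth [::] ps s -> av top <= av x.
Proof.
move=> E x_in; have top_in : top \in nth [::] ps s by rewrite E mem_head.
have := pile_top_max inv E x_in; rewrite leq_eqVlt => /orP [/eqP -> // | lt_x_top].
exact/ltnW/(pile_aval_decr inv x_in top_in).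
Qed.

End Invariant.

Hypothesis aval_inj : {in [pred x | x <= n] &, injective av}.

Section Step.
Variables (m : nat) (ps : seq (seq nat)) (s : nat).
Hypotheses (le_m_n : m <= n) (inv : pile_inv m ps).
Hypothesis skip : forall s', s' < s ->
  exists top r, nth [::] ps s' = top :: r /\ av top <= av m.
Hypothesis place : nth [::] ps s = [::] \/
  exists top r, nth [::] ps s = top :: r /\ av m < av top.
Local Notation ps' := (set_nth [::] ps s (m :: nth [::] ps s)).

Lemma nth_step s' :
  nth [::] ps' s' = if s' == s then m :: nth [::] ps s else nth [::] ps s'.
Proof. by rewrite nth_set_nth. Qed.

Lemma mem_step s' x :
  (x \in nth [::] ps' s') = ((s' == s) && (x == m)) || (x \in nth [::] ps s').
Proof. by rewrite nth_step; case: eqP => [-> | _]; rewrite ?in_cons. Qed.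

Lemma notin_pile_step s' : m \notin nth [::] ps s'.
Proof. by apply/negP => /(pile_mem_lt inv); rewrite ltnn. Qed.

Lemma step_aval_decr s' x y : x \in nth [::] ps' s' -> y \in nth [::] ps' s' ->
  x < y -> av y < av x.
Proof.
rewrite !mem_step => /orP [/andP [_ /eqP ->] | x_in] /orP [/andP [/eqP E /eqP ->] | y_in].
- by rewrite ltnn.
- by move=> /leq_trans /(_ (ltnW (pile_mem_lt inv y_in))); rewrite ltnn.
- move=> _; subst s'; case: place => [E | [top [r [E lt_m_top]]]]; first by rewrite E in x_in.
  exact: leq_trans lt_m_top (pile_top_aval_min inv E x_in).
- exact: (pile_aval_decr inv x_in y_in).
Qed.

Lemma step_tops_sorted s1 s2 top1 top2 r1 r2 : s1 < s2 ->
  nth [::] ps' s1 = top1 :: r1 -> nth [::] ps' s2 = top2 :: r2 -> av top1 <= av top2.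
Proof.
move=> lt_s12; rewrite !nth_step.
case: (s1 =P s) => [E1 | _]; case: (s2 =P s) => [E2 | _].
- by rewrite E1 E2 ltnn in lt_s12.
- case=> <- _ E2; subst s1; case: place => [E | [top [r [E lt_m_top]]]].
    by move: (pile_nonempty_prefix inv lt_s12); rewrite E E2 => /(_ isT).
  exact/ltnW/(leq_trans lt_m_top (pile_tops_sorted inv lt_s12 E E2)).
- move=> E1 [<- _]; subst s2; have [top [r [E le_top_m]]] := skip lt_s12.
  by move: E1; rewrite E => -[<- _].
- exact: (pile_tops_sorted inv lt_s12).
Qed.

Lemma step_prev_pile_below s' x : x \in nth [::] ps' s'.+1 ->
  exists y, [/\ y \in nth [::] ps' s', y < x & av y < av x].
Proof.
rewrite mem_step => /orP [/andP [/eqP E /eqP ->] | x_in]; last first.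
  have [y [y_in lt_y_x lt_ay_ax]] := prev_pile_below inv x_in.
  by exists y; rewrite mem_step y_in orbT.
have /skip [top [r [Etop le_top_m]]] : s' < s by rewrite -E.
have top_in : top \in nth [::] ps s' by rewrite Etop mem_head.
have lt_top_m := pile_mem_lt inv top_in.
exists top; split => //; first by rewrite mem_step top_in orbT.
rewrite ltn_neqAle le_top_m andbT; apply/eqP => /aval_inj.
by rewrite !inE => /(_ (ltnW (leq_trans lt_top_m le_m_n)) le_m_n) /eqP; rewrite ltn_eqF.
Qed.

Lemma step_increasing_pile_lt s1 s2 x y : x \in nth [::] ps' s1 -> y \in nth [::] ps' s2 ->
  x < y -> av x < av y -> s1 < s2.
Proof.
rewrite !mem_step => /orP [/andP [_ /eqP ->] | x_in] /orP [/andP [/eqP E /eqP ->] | y_in].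
- by rewrite ltnn.
- by move=> /leq_trans /(_ (ltnW (pile_mem_lt inv y_in))); rewrite ltnn.
- move=> _ lt_ax_am; subst s2; rewrite ltnNge; apply/negP => le_s_s1.
  case E1: (nth [::] ps s1) x_in => [// | top1 r1] x_in; rewrite -E1 in x_in.
  have lt_top1_m := leq_ltn_trans (pile_top_aval_min inv E1 x_in) lt_ax_am.
  case: place => [E | [top [r [E lt_m_top]]]];
    move: le_s_s1; rewrite leq_eqVlt => /orP [/eqP E' | lt_s_s1].
  + by rewrite -E' E in E1.
  + by move: (pile_nonempty_prefix inv lt_s_s1); rewrite E E1 => /(_ isT).
  + move: E1 lt_top1_m; rewrite -E' E => -[<-] _ lt_top_m.
    by have := ltn_trans lt_m_top lt_top_m; rewrite ltnn.
  + have le_top_top1 := pile_tops_sorted inv lt_s_s1 E E1.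
    by have := ltn_trans lt_m_top (leq_ltn_trans le_top_top1 lt_top1_m); rewrite ltnn.
- exact: (increasing_pile_lt inv x_in y_in).
Qed.

End Step.

Lemma pile_inv_nil : pile_inv 0 (nseq n.+1 [::]).
Proof.
have E s : nth [::] (nseq n.+1 [::]) s = [::] :> seq nat by rewrite nth_nseq if_same.
by split=> [|s x|x|s s' x|s|s x y|s top r y|s s' t t' r r'|s x|s s' x y];
  rewrite ?size_nseq ?E ?in_nil ?ltn0.
Qed.

Lemma pile_inv_step m ps : m <= n -> pile_inv m ps ->
  pile_inv m.+1 (put_on_pile a m ps).
Proof.
move=> le_m_n inv.
have ps_nil : has (@nilp nat) ps.
  apply/(has_nthP [::]); exists m; first by rewrite (size_piles inv).
  by rewrite /nilp size_eq0; apply: contraT => /(pile_nonempty_lt inv); rewrite ltnn.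
have [s [lt_s -> skip place]] := put_on_pile_spec a m ps_nil.
split.
- by rewrite size_set_nth -(size_piles inv); apply/maxn_idPr.
- by move=> s' x; rewrite mem_step => /orP [/andP [_ /eqP ->] | /(pile_mem_lt inv)/ltnW].
- move=> x; rewrite ltnS leq_eqVlt => /orP [/eqP -> | /(pile_mem_ex inv) [s' x_in]].
    by exists s; rewrite mem_step !eqxx.
  by exists s'; rewrite mem_step x_in orbT.
- move=> s1 s2 x; rewrite !mem_step.
  case/orP => [/andP [/eqP -> /eqP ->] | x1]; case/orP => [/andP [/eqP -> /eqP x_m] | x2] //.
  + by rewrite (negbTE (notin_pile_step inv s2)) in x2.
  + by rewrite x_m (negbTE (notin_pile_step inv s1)) in x1.
  + exact: (pile_mem_unique inv x1 x2).
- move=> s'; rewrite nth_step; case: eqP => _; last exact: (uniq_pile inv).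
  by rewrite /= (notin_pile_step inv) (uniq_pile inv).
- exact: (step_aval_decr inv place).
- move=> s' top r y; rewrite nth_step; case: eqP => _; last exact: (pile_top_max inv).
  by case=> <- _; rewrite in_cons => /orP [/eqP -> // | /(pile_mem_lt inv)/ltnW].
- exact: (step_tops_sorted inv skip place).
- exact: (step_prev_pile_below le_m_n inv skip).
- exact: (step_increasing_pile_lt inv place).
Qed.

Lemma pile_inv_foldl m : m <= n.+1 ->
  pile_inv m (foldl (fun ps k => put_on_pile a k ps) (nseq n.+1 [::]) (iota 0 m)).
Proof.
elim: m => [_ | m IH lt_m_n]; first exact: pile_inv_nil.
rewrite -[in iota _ _]addn1 iotaD add0n foldl_cat /=.
exact: (pile_inv_step lt_m_n (IH (ltnW lt_m_n))).
Qed.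

Lemma pile_inv_piles : pile_inv n.+1 (piles n a).
Proof. exact: pile_inv_foldl. Qed.

End PileInvariant.

Lemma in_range_neq0 n x : in_range n x -> x != 0.
Proof. by case: x. Qed.

Lemma aval_in_range n (a : nat -> nat) x : in_range n x -> aval a x = a x.
Proof. by rewrite /aval => /in_range_neq0 /negbTE ->. Qed.

Lemma card_fset_iota m k : #|` [fset s in iota m k]| = k.
Proof. by rewrite card_fseq undup_id ?iota_uniq // size_iota. Qed.

Lemma in_range_le n x : in_range n x -> x <= n.
Proof. by case/andP. Qed.

Definition below (F : {fset nat}) u := [fset v in F | v < u].
Definition above (F : {fset nat}) u := [fset v in F | u < v].

Lemma in_below F u v : (v \in below F u) = (v \in F) && (v < u).
Proof. by rewrite !inE. Qed.

Lemma in_above F u v : (v \in above F u) = (v \in F) && (u < v).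
Proof. by rewrite !inE. Qed.

Lemma card_fsetU_disjoint (K : choiceType) (A B : {fset K}) :
  [disjoint A & B] -> #|` A `|` B| = (#|` A| + #|` B|)%N.
Proof. by move=> /disjoint_fsetI0 disj_AB; rewrite -cardfsUI disj_AB cardfs0 addn0. Qed.

Lemma card_below_above F u : u \in F ->
  #|` F| = (#|` below F u| + (#|` above F u|).+1)%N.
Proof.
move=> uF; have F_split : F = below F u `|` (u |` above F u).
  apply/fsetP => v; rewrite in_fsetU in_fset1U in_below in_above.
  by case: (ltngtP v u) => [||->]; rewrite ?andbT ?andbF ?orbF ?uF.
rewrite {1}F_split card_fsetU_disjoint ?cardfsU1 ?in_above ?ltnn ?andbF ?add1n //.
apply/fdisjointP => v; rewrite in_below in_fset1U in_above => /andP [_ lt_vu].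
by rewrite negb_or (ltn_eqF lt_vu) ltnNge (ltnW lt_vu) andbF.
Qed.

Section Piles.
Variables (n : nat) (a : nat -> nat).
Hypothesis a_distinct : distinct_seq n a.
Local Notation av := (aval a).
Local Notation P s := (pile n a s).

Lemma a_gt0 x : in_range n x -> 0 < a x.
Proof. by case: a_distinct => a_range _ /a_range /andP []. Qed.

Lemma aval_inj : {in [pred x | x <= n] &, injective av}.
Proof.
rewrite /aval => -[|x] [|y]; rewrite !inE //= => le_x_n le_y_n E.
- by have := a_gt0 (x := y.+1) le_y_n; rewrite -E.
- by have := a_gt0 (x := x.+1) le_x_n; rewrite E.
- by case: a_distinct => _ a_inj; apply: a_inj.
Qed.

Let inv := pile_inv_piles aval_inj.

Definition pile_of x := find (fun p => x \in p) (piles n a).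

Lemma mem_pile_of x : x <= n -> x \in P (pile_of x).
Proof.
move=> le_x_n; have [s x_in] := pile_mem_ex inv (x := x) le_x_n.
apply: (nth_find [::] (a := fun p => x \in p)); apply/(has_nthP [::]); exists s => //.
by rewrite ltnNge; apply: contraL x_in => /(nth_default [::]) ->.
Qed.

Lemma pile_mem_le x s : x \in P s -> x <= n.
Proof. exact: pile_mem_lt inv s x. Qed.

Lemma pile_ofE x s : x \in P s -> pile_of x = s.
Proof. by move=> x_in; apply: (pile_mem_unique inv (mem_pile_of (pile_mem_le x_in)) x_in). Qed.

Lemma pile_of0 : pile_of 0 = 0.
Proof.
have := mem_pile_of (leq0n n); case: (pile_of 0) => // s.
by case/(prev_pile_below inv) => y [].
Qed.

Lemma pile_of_lt x y : x <= n -> y <= n -> x < y -> av x < av y -> pile_of x < pile_of y.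
Proof.
by move=> le_x_n le_y_n; apply: (increasing_pile_lt inv (mem_pile_of le_x_n) (mem_pile_of le_y_n)).
Qed.

Lemma pile_of_gt0 x : in_range n x -> 0 < pile_of x.
Proof.
move=> x_range; have x_neq0 := in_range_neq0 x_range.
rewrite -pile_of0; apply: pile_of_lt => //; first exact: in_range_le.
  by rewrite lt0n.
by rewrite /aval /= (negbTE x_neq0) a_gt0.
Qed.

Lemma pile_of_prev x s : x <= n -> pile_of x = s.+1 ->
  exists y, [/\ pile_of y = s, y < x & av y < av x].
Proof.
move=> le_x_n E; have := mem_pile_of le_x_n; rewrite E.
by case/(prev_pile_below inv) => y [/pile_ofE y_s lt_y_x lt_ay_ax]; exists y.
Qed.

Lemma pile_of_aval_decr x y : x <= n -> y <= n ->
  pile_of x = pile_of y -> x < y -> av y < av x.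
Proof.
move=> le_x_n le_y_n E; have := mem_pile_of le_x_n; rewrite E => x_in.
exact: (pile_aval_decr inv x_in (mem_pile_of le_y_n)).
Qed.

Lemma increasing_chain_to x : x <= n -> exists C : {fset nat},
  [/\ subset_n n C, feasible a C, #|` C| = pile_of x &
      forall c, c \in C -> c <= x /\ av c <= av x].
Proof.
move Es: (pile_of x) => s; elim: s x Es => [|s IH] x Es le_x_n.
  by exists fset0; split=> // c; rewrite inE.
have [y [Ey lt_y_x lt_ay_ax]] := pile_of_prev le_x_n Es.
have [C [C_sub C_feas C_card C_le]] := IH y Ey (ltnW (leq_trans lt_y_x le_x_n)).
have x_range : in_range n x.
  by rewrite /in_range le_x_n andbT lt0n; apply/eqP => x0; move: Es; rewrite x0 pile_of0.
have C_lt c : c \in C -> c < x /\ a c < a x.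
  move=> /[dup] /C_sub c_range /C_le [le_c_y le_ac_ay].
  rewrite -(aval_in_range a c_range) -(aval_in_range a x_range).
  by split; [exact: leq_ltn_trans lt_y_x | exact: leq_ltn_trans lt_ay_ax].
exists (x |` C); split.
- by move=> c; rewrite !inE => /orP [/eqP -> | /C_sub].
- move=> c1 c2; rewrite !inE => /orP [/eqP -> | c1C] /orP [/eqP -> | c2C].
  + by rewrite ltnn.
  + by case: (C_lt _ c2C) => lt_c2_x _ /(ltn_trans lt_c2_x); rewrite ltnn.
  + by case: (C_lt _ c1C).
  + exact: C_feas.
- by rewrite cardfsU1 C_card; case: (boolP (x \in C)) => // /C_lt []; rewrite ltnn.
- move=> c; rewrite !inE => /orP [/eqP -> // | /C_le [le_c_y le_ac_ay]].
  by split; [exact: leq_trans (ltnW lt_y_x) | exact: leq_trans (ltnW lt_ay_ax)].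
Qed.

Section FeasibleSet.
Variable F : {fset nat}.
Hypotheses (F_sub : subset_n n F) (F_feas : feasible a F).

Lemma feasible_pile_of_lt u v : u \in F -> v \in F -> u < v -> pile_of u < pile_of v.
Proof.
move=> uF vF lt_uv.
apply: (pile_of_lt (in_range_le (F_sub uF)) (in_range_le (F_sub vF)) lt_uv).
rewrite (aval_in_range a (F_sub uF)) (aval_in_range a (F_sub vF)).
exact: F_feas uF vF lt_uv.
Qed.

Lemma feasible_pile_of_leq u v : u \in F -> v \in F -> pile_of u <= pile_of v -> u <= v.
Proof.
move=> uF vF le_uv; rewrite leqNgt; apply/negP => /(feasible_pile_of_lt vF uF).
by rewrite ltnNge le_uv.
Qed.

Lemma feasible_pile_of_ltP u v : u \in F -> v \in F ->
  pile_of u < pile_of v -> u < v /\ a u < a v.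
Proof.
move=> uF vF; case: (ltngtP u v) => [lt_uv | lt_vu | ->]; last by rewrite ltnn.
- by split=> //; apply: F_feas.
- by move=> /ltn_trans /(_ (feasible_pile_of_lt vF uF lt_vu)); rewrite ltnn.
Qed.

Lemma feasible_pile_of_inj u v : u \in F -> v \in F -> pile_of u = pile_of v -> u = v.
Proof.
move=> uF vF E; case: (ltngtP u v) => // [lt_uv | lt_vu].
- by have := feasible_pile_of_lt uF vF lt_uv; rewrite E ltnn.
- by have := feasible_pile_of_lt vF uF lt_vu; rewrite E ltnn.
Qed.

Lemma pile_of_below_sub u : u \in F ->
  pile_of @` below F u `<=` [fset s in iota 1 (pile_of u).-1].
Proof.
move=> uF; apply/fsubsetP => s /imfsetP [v /=]; rewrite !inE => /andP [vF lt_vu] ->.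
have := feasible_pile_of_lt vF uF lt_vu; have := pile_of_gt0 (F_sub vF).
by rewrite mem_iota; lia.
Qed.

Lemma card_pile_of_below u : #|` pile_of @` below F u| = #|` below F u|.
Proof.
apply/eqP/card_in_imfsetP => v w; rewrite !inE => /andP [vF _] /andP [wF _].
exact: feasible_pile_of_inj.
Qed.

Lemma card_below_lt u : u \in F -> #|` below F u| < pile_of u.
Proof.
move=> uF; rewrite -card_pile_of_below.
have := fsubset_leq_card (pile_of_below_sub uF); rewrite card_fset_iota.
by have := pile_of_gt0 (F_sub uF); lia.
Qed.

End FeasibleSet.

Section MaxFeasible.
Variable I : {fset nat}.
Hypothesis I_max : max_feasible n a I.

Lemma max_feasible_pile_of_le u : u \in I -> pile_of u <= (#|` below I u|).+1.
Proof.
case: I_max => I_sub I_feas I_card uI.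
have [C [C_sub C_feas C_card C_le]] := increasing_chain_to (in_range_le (I_sub u uI)).
have card_K : #|` C `|` above I u| = (#|` C| + #|` above I u|)%N.
  apply/card_fsetU_disjoint/fdisjointP => v /C_le [le_vu _].
  by rewrite in_above negb_and ltnNge le_vu orbT.
have K_feas : feasible a (C `|` above I u).
  move=> x y; rewrite !in_fsetU !in_above.
  move=> /orP [xC | /andP [xI lt_ux]] /orP [yC | /andP [yI lt_uy]].
  - exact: C_feas.
  - move=> _; have [_ le_ax_au] := C_le x xC.
    rewrite -(aval_in_range a (C_sub x xC)) -(aval_in_range a (I_sub y yI)).
    apply: leq_ltn_trans le_ax_au _.
    by rewrite (aval_in_range a (I_sub u uI)) (aval_in_range a (I_sub y yI)) I_feas.
  - by have [le_yu _] := C_le y yC; rewrite ltnNge (ltnW (leq_ltn_trans le_yu lt_ux)).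
  - exact: I_feas.
have K_sub : subset_n n (C `|` above I u).
  by move=> v; rewrite in_fsetU in_above => /orP [/C_sub | /andP [/I_sub]].
have := I_card _ K_sub K_feas; rewrite card_K (card_below_above uI) C_card; lia.
Qed.

Lemma max_feasible_meets_pile u s : u \in I -> 0 < s <= pile_of u ->
  exists v, [/\ v \in I, pile_of v = s & v <= u].
Proof.
case: I_max => I_sub I_feas _ uI /andP [s_gt0].
rewrite leq_eqVlt => /orP [/eqP -> | lt_s_u]; first by exists u.
have onto : pile_of @` below I u = [fset s in iota 1 (pile_of u).-1].
  apply/eqP; rewrite eqEfcard pile_of_below_sub //= card_fset_iota.
  rewrite card_pile_of_below //; have := max_feasible_pile_of_le uI; lia.
have : s \in [fset s in iota 1 (pile_of u).-1] by rewrite inE mem_iota; lia.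
rewrite -onto => /imfsetP [v /=]; rewrite in_below => /andP [vI lt_vu] ->.
by exists v; split=> //; apply: ltnW.
Qed.

Lemma max_feasible_next_pile u v : u \in I -> v \in I -> u < v ->
  exists w, [/\ w \in I, pile_of w = (pile_of u).+1, w <= v & u < w /\ a u < a w].
Proof.
case: I_max => I_sub I_feas _ uI vI lt_uv.
have /(max_feasible_meets_pile vI) [w [wI pile_w le_wv]] : 0 < (pile_of u).+1 <= pile_of v.
  by rewrite (feasible_pile_of_lt I_sub I_feas uI vI lt_uv).
exists w; split=> //; apply: (feasible_pile_of_ltP I_sub I_feas uI wI).
by rewrite pile_w.
Qed.

End MaxFeasible.

Lemma pile_mem_in_range s x : 0 < s -> x \in P s -> in_range n x.
Proof.
move=> s_gt0 x_in; rewrite /in_range (pile_mem_le x_in) andbT lt0n.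
by apply: contraTneq s_gt0 => x0; rewrite -(pile_ofE x_in) x0 pile_of0.
Qed.

Lemma pile_edge s x y : 0 < s -> x \in P s -> y \in P s -> x != y -> pg_edge n a x y.
Proof.
move=> s_gt0 x_in y_in neq_xy.
have decr u v : u \in P s -> v \in P s -> u < v -> a v < a u.
  move=> u_in v_in; rewrite -(aval_in_range a (pile_mem_in_range s_gt0 u_in)).
  rewrite -(aval_in_range a (pile_mem_in_range s_gt0 v_in)).
  apply: pile_of_aval_decr (pile_mem_le u_in) (pile_mem_le v_in) _.
  by rewrite (pile_ofE u_in) (pile_ofE v_in).
rewrite /pg_edge !(pile_mem_in_range s_gt0) //=.
case: (ltngtP x y) => [lt_xy | lt_yx | eq_xy].
- by rewrite (decr x y).
- by rewrite (decr y x) ?orbT.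
- by rewrite eq_xy eqxx in neq_xy.
Qed.

Lemma bipartite_pile_pair s u v : bipartite_pg n a -> 0 < s -> u \in P s -> v \in P s -> u != v ->
  perm_eq (P s) [:: u; v].
Proof.
move=> [c c_proper] s_gt0 u_in v_in neq_uv.
apply: uniq_perm; rewrite ?(uniq_pile inv) /= ?inE ?neq_uv // => z.
rewrite !inE; apply/idP/idP => [z_in | /orP [] /eqP ->] //.
apply: contraTT isT; rewrite negb_or => /andP [neq_zu neq_zv].
have := c_proper _ _ (pile_edge s_gt0 u_in v_in neq_uv).
have := c_proper _ _ (pile_edge s_gt0 z_in u_in neq_zu).
have := c_proper _ _ (pile_edge s_gt0 z_in v_in neq_zv).
by case: (c u); case: (c v); case: (c z).
Qed.

End Piles.

Lemma feasible_replace (a : nat -> nat) (F : {fset nat}) i j : feasible a F ->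
  (forall v, v \in F -> v != i -> v < j -> a v < a j) ->
  (forall v, v \in F -> v != i -> j < v -> a j < a v) ->
  feasible a ((F `\ i) `|` [fset j]).
Proof.
move=> F_feas below_j above_j x y; rewrite !in_fsetU !in_fsetD1 !in_fset1.
move=> /orP [/andP [neq_xi xF] | /eqP ->] /orP [/andP [neq_yi yF] | /eqP ->] lt_xy.
- exact: F_feas.
- exact: below_j.
- exact: above_j.
- by rewrite ltnn in lt_xy.
Qed.

Lemma pg_edgeC n (a : nat -> nat) x y : pg_edge n a x y = pg_edge n a y x.
Proof. by rewrite /pg_edge andbCA orbC. Qed.

Lemma pg_edge_lt n (a : nat -> nat) x y : in_range n x -> in_range n y ->
  x < y -> a y < a x -> pg_edge n a x y.
Proof. by rewrite /pg_edge => -> -> -> ->. Qed.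

Lemma pg_edge_increasing n (a : nat -> nat) x y : x < y -> a x < a y -> ~~ pg_edge n a x y.
Proof.
rewrite /pg_edge => lt_xy lt_axy; rewrite lt_xy ltnNge (ltnW lt_axy) ltnNge (ltnW lt_xy).
by rewrite !andbF.
Qed.

Lemma mixed_withC I J p i j : mixed_with I J p i j -> mixed_with J I p j i.
Proof.
case=> iI jJ neq_ij perm_p; split=> //; first by rewrite eq_sym.
by rewrite (perm_trans perm_p) // (perm_catC [:: i] [:: j]).
Qed.

Lemma mixedC I J p : mixed I J p -> mixed J I p.
Proof. by case=> i [j /mixed_withC p_mixed]; exists j, i. Qed.

Lemma no_forbidden_pairsC n a I J :
  no_forbidden_pairs n a I J -> no_forbidden_pairs n a J I.
Proof. by move=> no_fp s t [neq_st /mixedC s_mixed /mixedC t_mixed C4]; apply: (no_fp s t). Qed.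

Lemma leftmost_mixedC n a I J t : leftmost_mixed n a I J t -> leftmost_mixed n a J I t.
Proof. by case=> /mixedC t_mixed t_min; split=> // s lt_st /mixedC /(t_min s lt_st). Qed.

Lemma pattern3412_induces_C4 n (a : nat -> nat) S p q r s :
  in_range n p -> in_range n q -> in_range n r -> in_range n s ->
  p < q -> q < r -> r < s -> a r < a s -> a s < a p -> a p < a q ->
  perm_eq S [:: p; r; q; s] -> induces_C4 n a S.
Proof.
move=> p_range q_range r_range s_range lt_pq lt_qr lt_rs lt_ars lt_asp lt_apq perm_S.
have lt_pr := ltn_trans lt_pq lt_qr; have lt_ps := ltn_trans lt_pr lt_rs.
have lt_qs := ltn_trans lt_qr lt_rs.
exists p, r, q, s; split=> //; first by rewrite /= !inE; lia.
split; last first.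
- exact: pg_edge_increasing lt_rs lt_ars.
- exact: pg_edge_increasing lt_pq lt_apq.
apply/and4P; split.
- exact: pg_edge_lt lt_pr (ltn_trans lt_ars lt_asp).
- by rewrite pg_edgeC; apply: pg_edge_lt lt_qr (ltn_trans (ltn_trans lt_ars lt_asp) lt_apq).
- exact: pg_edge_lt lt_qs (ltn_trans lt_asp lt_apq).
- by rewrite pg_edgeC; apply: pg_edge_lt lt_ps lt_asp.
Qed.

Section LeftmostMixedPile.
Variables (n : nat) (a : nat -> nat) (I J : {fset nat}) (t i j : nat).
Hypotheses (a_distinct : distinct_seq n a) (bip : bipartite_pg n a).
Hypotheses (I_max : max_feasible n a I) (J_max : max_feasible n a J).
Hypotheses (no_fp : no_forbidden_pairs n a I J) (t_leftmost : leftmost_mixed n a I J t).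
Hypotheses (t_mixed : mixed_with I J (pile n a t) i j) (lt_ij : i < j).
Local Notation P s := (pile n a s).
Local Notation pile_of := (pile_of n a).

Let I_sub : subset_n n I. Proof. by case: I_max. Qed.
Let I_feas : feasible a I. Proof. by case: I_max. Qed.
Let J_sub : subset_n n J. Proof. by case: J_max. Qed.
Let J_feas : feasible a J. Proof. by case: J_max. Qed.
Let iI : i \in I. Proof. by case: t_mixed. Qed.
Let jJ : j \in J. Proof. by case: t_mixed. Qed.

Let pile_of_i : pile_of i = t.
Proof.
by case: t_mixed => _ _ _ /perm_mem p_t; apply: (pile_ofE a_distinct); rewrite p_t mem_head.
Qed.

Let pile_of_j : pile_of j = t.
Proof.
case: t_mixed => _ _ _ /perm_mem p_t; apply: (pile_ofE a_distinct).
by rewrite p_t !inE eqxx orbT.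
Qed.

Lemma lt_aj_ai : a j < a i.
Proof.
rewrite -(aval_in_range a (I_sub iI)) -(aval_in_range a (J_sub jJ)).
apply: (pile_of_aval_decr a_distinct (in_range_le (I_sub iI)) (in_range_le (J_sub jJ))) lt_ij.
by rewrite pile_of_i pile_of_j.
Qed.

(* Otherwise pile t - 1 would be a mixed pile to the left of pile t. *)
Lemma shared_prev_pile : 1 < t -> exists u, [/\ u \in I, u \in J & pile_of u = t.-1].
Proof.
move=> lt_1t; have prev_gt0 : 0 < t.-1 by rewrite -ltnS prednK // ltnW.
have /(max_feasible_meets_pile a_distinct I_max iI) [u [uI pile_u _]] :
  0 < t.-1 <= pile_of i by rewrite pile_of_i prev_gt0 leq_pred.
have /(max_feasible_meets_pile a_distinct J_max jJ) [u' [u'J pile_u' _]] :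
  0 < t.-1 <= pile_of j by rewrite pile_of_j prev_gt0 leq_pred.
case: (eqVneq u u') => [eq_uu' | neq_uu']; first by exists u; split=> //; rewrite eq_uu'.
case: t_leftmost => _ /(_ t.-1); case; first by rewrite ltn_predL ltnW.
exists u, u'; split=> //; apply: (bipartite_pile_pair a_distinct bip prev_gt0 _ _ neq_uu').
- by rewrite -pile_u mem_pile_of // in_range_le // I_sub.
- by rewrite -pile_u' mem_pile_of // in_range_le // J_sub.
Qed.

Lemma below_i_lt_aj v : v \in I -> v < i -> a v < a j.
Proof.
move=> vI lt_vi.
have lt_vt : pile_of v < t.
  by rewrite -pile_of_i (feasible_pile_of_lt a_distinct I_sub I_feas vI iI lt_vi).
have v_gt0 := pile_of_gt0 a_distinct (I_sub vI).
have [u [uI uJ pile_u]] := shared_prev_pile (leq_ltn_trans v_gt0 lt_vt).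
have le_vu : v <= u.
  by apply: (feasible_pile_of_leq a_distinct I_sub I_feas vI uI); rewrite pile_u; lia.
have [lt_uj lt_au_aj] : u < j /\ a u < a j.
  by apply: (feasible_pile_of_ltP a_distinct J_sub J_feas uJ jJ); rewrite pile_u pile_of_j; lia.
move: le_vu; rewrite leq_eqVlt => /orP [/eqP -> // | lt_vu].
exact: ltn_trans (I_feas vI uI lt_vu) lt_au_aj.
Qed.

Lemma below_j_lt_i v : v \in J -> v < j -> v < i.
Proof.
move=> vJ lt_vj.
have lt_vt : pile_of v < t.
  by rewrite -pile_of_j (feasible_pile_of_lt a_distinct J_sub J_feas vJ jJ lt_vj).
have v_gt0 := pile_of_gt0 a_distinct (J_sub vJ).
have [u [uI uJ pile_u]] := shared_prev_pile (leq_ltn_trans v_gt0 lt_vt).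
have le_vu : v <= u.
  by apply: (feasible_pile_of_leq a_distinct J_sub J_feas vJ uJ); rewrite pile_u; lia.
have [lt_ui _] : u < i /\ a u < a i.
  by apply: (feasible_pile_of_ltP a_distinct I_sub I_feas uI iI); rewrite pile_u pile_of_i; lia.
exact: leq_ltn_trans le_vu lt_ui.
Qed.

Lemma swap_in_I_feasible : (forall v, v \in I -> i < v -> j < v) ->
  feasible a ((I `\ i) `|` [fset j]).
Proof.
move=> above_i; apply: feasible_replace => // v vI neq_vi.
- case: (ltngtP v i) neq_vi => // [lt_vi _ _ | lt_iv _]; first exact: below_i_lt_aj.
  by move/(ltn_trans (above_i v vI lt_iv)); rewrite ltnn.
- by move=> lt_jv; apply: ltn_trans lt_aj_ai (I_feas iI vI (ltn_trans lt_ij lt_jv)).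
Qed.

Lemma swap_in_J_feasible : (forall v, v \in J -> j < v -> a i < a v) ->
  feasible a ((J `\ j) `|` [fset i]).
Proof.
move=> above_j; apply: feasible_replace => // v vJ neq_vj.
- by move=> lt_vi; apply: ltn_trans (J_feas vJ jJ (ltn_trans lt_vi lt_ij)) lt_aj_ai.
- move=> lt_iv; apply: above_j => //.
  case: (ltngtP v j) neq_vj => // lt_vj _.
  by have := ltn_trans (below_j_lt_i vJ lt_vj) lt_iv; rewrite ltnn.
Qed.

Lemma crossing_forbidden_pair v v' : v \in I -> i < v -> v <= j ->
  v' \in J -> j < v' -> a v' <= a i -> forbidden_pair n a I J t t.+1.
Proof.
move=> vI lt_iv le_vj v'J lt_jv' le_av'_ai.
have [w [wI pile_w le_wv [lt_iw lt_ai_aw]]] :=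
  max_feasible_next_pile a_distinct I_max iI vI lt_iv.
have [w' [w'J pile_w' le_w'v' [lt_jw' lt_aj_aw']]] :=
  max_feasible_next_pile a_distinct J_max jJ v'J lt_jv'.
rewrite pile_of_i in pile_w; rewrite pile_of_j in pile_w'.
have lt_wj : w < j.
  rewrite ltn_neqAle (leq_trans le_wv le_vj) andbT.
  by apply/eqP => eq_wj; move: pile_w; rewrite eq_wj pile_of_j => /eqP; rewrite ltn_eqF.
have lt_aw'_ai : a w' < a i.
  have le_aw'_av' : a w' <= a v'.
    by move: le_w'v'; rewrite leq_eqVlt => /orP [/eqP -> // | /(J_feas w'J v'J)/ltnW].
  rewrite ltn_neqAle (leq_trans le_aw'_av' le_av'_ai) andbT.
  apply/eqP => /(proj2 a_distinct _ _ (J_sub w'J) (I_sub iI)) eq_w'i.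
  by have := ltn_trans lt_ij lt_jw'; rewrite eq_w'i ltnn.
have neq_ww' : w != w' by rewrite neq_ltn (ltn_trans lt_wj lt_jw').
have w_in : w \in P t.+1 by rewrite -pile_w mem_pile_of // in_range_le // I_sub.
have w'_in : w' \in P t.+1 by rewrite -pile_w' mem_pile_of // in_range_le // J_sub.
split; first by rewrite neq_ltn ltnSn.
- by exists i, j.
- by exists w, w'; split=> //; apply: (bipartite_pile_pair a_distinct bip).
apply: (pattern3412_induces_C4 (I_sub iI) (I_sub wI) (J_sub jJ) (J_sub w'J)) => //.
case: t_mixed => _ _ _ perm_t.
exact: perm_cat perm_t (bipartite_pile_pair a_distinct bip (ltn0Sn t) w_in w'_in neq_ww').
Qed.

Lemma leftmost_mixed_swap :
  feasible a ((I `\ i) `|` [fset j]) \/ feasible a ((J `\ j) `|` [fset i]).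
Proof.
have [/hasP [v vI /andP [lt_iv le_vj]] | no_v] := boolP (has (fun v => i < v <= j) I).
  have [/hasP [v' v'J /andP [lt_jv' le_av'_ai]] | no_v'] :=
    boolP (has (fun v' => (j < v') && (a v' <= a i)) J).
    by case: (no_fp (crossing_forbidden_pair vI lt_iv le_vj v'J lt_jv' le_av'_ai)).
  right; apply: swap_in_J_feasible => v' v'J lt_jv'; rewrite ltnNge.
  by apply: contra no_v' => le_av'_ai; apply/hasP; exists v'; rewrite ?lt_jv'.
left; apply: swap_in_I_feasible => v vI lt_iv; rewrite ltnNge.
by apply: contra no_v => le_vj; apply/hasP; exists v; rewrite ?lt_iv.
Qed.

End LeftmostMixedPile.

Theorem lemma4 (n : nat) (a : nat -> nat) (I J : {fset nat}) (t i j : nat) :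
  distinct_seq n a ->
  bipartite_pg n a ->
  max_feasible n a I ->
  max_feasible n a J ->
  no_forbidden_pairs n a I J ->
  leftmost_mixed n a I J t ->
  mixed_with I J (pile n a t) i j ->
  feasible a ((I `\ i) `|` [fset j]) \/ feasible a ((J `\ j) `|` [fset i]).
Proof.
move=> a_distinct bip I_max J_max no_fp t_leftmost t_mixed.
have [_ _ neq_ij _] := t_mixed.
case: (ltngtP i j) neq_ij => // [lt_ij _ | lt_ji _].
  exact: (leftmost_mixed_swap a_distinct bip I_max J_max no_fp t_leftmost t_mixed lt_ij).
have := leftmost_mixed_swap a_distinct bip J_max I_max (no_forbidden_pairsC no_fp)
  (leftmost_mixedC t_leftmost) (mixed_withC t_mixed) lt_ji.
by case; [right | left].
Qed.
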